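(* Let $N\ge3$. For every $\gamma\in(\mathbb{Z}/N\mathbb{Z})^\times$, $\tilde\delta_\gamma(\mathfrak{dmr}_0^{[N]})\subset\mathfrak{dmr}_0^{[N]}$ and $\delta_\gamma(\mathfrak{dmr}_0^{\mu_N})\subset\mathfrak{dmr}_0^{\mu_N}$.
   Context: $\mu_N$ the complex $N$-th roots of unity, $\iota:\{1,\dots,N\}\to\mathbb{Z}/N\mathbb{Z}$ the residue-class bijection. $\mathbb{Q}\langle\langle\mathcal L\rangle\rangle$: noncommutative formal power series over $\mathcal L$; $(\psi\mid w)$ the coefficient of the word $w$. Alphabets $X=\{x_0\}\cup\{x_\zeta:\zeta\in\mu_N\}$, $Y=\{y_{k,\zeta}:k\ge1,\zeta\in\mu_N\}$, $\widetilde X=\{\tilde x\}\cup\{\tilde x_\alpha:\alpha\in\mathbb{Z}/N\mathbb{Z}\}$, $\widetilde Y=\{\tilde y_{k,\alpha}:k\ge1,\alpha\in\mathbb{Z}/N\mathbb{Z}\}$, with $y_{k,\zeta}\equiv x_0^{k-1}x_\zeta$, $\tilde y_{k,\alpha}\equiv\tilde x^{k-1}\tilde x_\alpha$; $\pi_Y$ (resp. $\pi_{\widetilde Y}$) is the projection of $\mathbb{Q}\langle\langle X\rangle\rangle=\mathbb{Q}\langle\langle Y\rangle\rangle\oplus\mathbb{Q}\langle\langle X\rangle\rangle x_0$ (resp. $\mathbb{Q}\langle\langle\widetilde X\rangle\rangle=\mathbb{Q}\langle\langle\widetilde Y\rangle\rangle\oplus\mathbb{Q}\langle\langle\widetilde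 X\rangle\rangle\tilde x$) onto the first summand. Coproducts: $\widehat\Delta_{sh}$, $\widehat\Delta_{\tilde{sh}}$ make all letters of $X$, $\widetilde X$ primitive; $\widehat\Delta_*(y_{k,\zeta})=y_{k,\zeta}\otimes1+1\otimes y_{k,\zeta}+\sum_{k_1+k_2=k,\,k_i\ge1,\,\zeta_1\zeta_2=\zeta}y_{k_1,\zeta_1}\otimes y_{k_2,\zeta_2}$; $\widehat\Delta_{\tilde*}(\tilde y_{k,\alpha})=\tilde y_{k,\alpha}\otimes1+1\otimes\tilde y_{k,\alpha}+\sum_{k_1+k_2=k,\,k_i\ge1}\tilde y_{k_1,\alpha}\otimes\tilde y_{k_2,\alpha}$. Linear maps: $\mathbf p(x_0^{k_1-1}x_{\zeta_1}\cdots x_0^{k_r-1}x_{\zeta_r}x_0^{k_{r+1}-1})=x_0^{k_1-1}x_{\zeta_1}x_0^{k_2-1}x_{\zeta_1\zeta_2}\cdots x_0^{k_r-1}x_{\zeta_1\cdots\zeta_r}x_0^{k_{r+1}-1}$; $\widetilde{\mathbf q}(\tilde x^{k_1-1}\tilde x_{\alpha_1}\cdots\tilde x^{k_r-1}\tilde x_{\alpha_r}\tilde x^{k_{r+1}-1})=\tilde x^{k_1-1}\tilde x_{\alpha_1-\alpha_2}\cdots\tilde x^{k_{r-1}-1}\tilde x_{\alpha_{r-1}-\alpha_r}\tilde x^{k_r-1}\tilde x_{\alpha_r}\tilde x^{k_{r+1}-1}$. $\mathfrak{dmr}_0^{\mu_N}$: the $\psi\in\mathbb{Q}\langle\langle X\rangle\rangle$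 with (i) $(\psi\mid x_0)=(\psi\mid x_1)=0$; (ii) $\psi$ primitive for $\widehat\Delta_{sh}$; (iii) $(\psi\mid x_\zeta-x_{\zeta^{-1}})=0$ for all $\zeta\in\mu_N$; (iv) $\psi_*:=\pi_Y\mathbf p^{-1}(\psi)+\sum_{n\ge2}\frac{(-1)^{n-1}}{n}(\psi\mid x_0^{n-1}x_1)y_{1,1}^n$ primitive for $\widehat\Delta_*$. $\mathfrak{dmr}_0^{[N]}$: the $\widetilde\psi\in\mathbb{Q}\langle\langle\widetilde X\rangle\rangle$ with (i) $(\widetilde\psi\mid\tilde x)=\sum_\alpha(\widetilde\psi\mid\tilde x_\alpha)=0$; (ii) $\widetilde\psi$ primitive for $\widehat\Delta_{\tilde{sh}}$; (iii) $(\widetilde\psi\mid\tilde x_\alpha-\tilde x_{-\alpha})=0$ for all $\alpha$; (iv) $\widetilde\psi_{\tilde*}:=\pi_{\widetilde Y}\widetilde{\mathbf q}^{-1}(\widetilde\psi)+\sum_{n\ge2}\sum_{a,b_1,\dots,b_n=1}^N\frac{(-1)^{n-1}}{nN^{n+1}}(\widetilde\psi\mid\tilde x^{n-1}\tilde x_{\iota(a)})\tilde y_{1,\iota(b_1)}\cdots\tilde y_{1,\iota(b_n)}$ primitive for $\widehat\Delta_{\tilde*}$. For $\gamma\in(\mathbb{Z}/N\mathbb{Z})^\times$: $\delta_\gamma$ is the algebra automorphism of $\mathbb{Q}\langle\langle X\rangle\rangle$ with $x_0\mapsto x_0$, $x_\zeta\mapsto x_{\zeta^{\iota^{-1}(\gamma)}}$;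 $\tilde\delta_\gamma$ is the algebra automorphism of $\mathbb{Q}\langle\langle\widetilde X\rangle\rangle$ with $\tilde x\mapsto\tilde x$, $\tilde x_\alpha\mapsto\tilde x_{\gamma\alpha}$. *)

From HB Require Import structures.
From mathcomp Require Import all_boot all_order all_algebra.
Set Implicit Arguments. Unset Strict Implicit. Unset Printing Implicit Defensive.
Import Order.TTheory GRing.Theory Num.Theory.
Local Open Scope ring_scope.

(* Noncommutative formal power series Q<<L>> : a series is the function     *)
(* w |-> (psi | w) on words (seq L).                                         *)
Definition series (L : Type) := seq L -> rat.

Definition b2q (b : bool) : rat := if b then 1 else 0.

(* Coproducts.  A coproduct on Q<<L>> which is an algebra morphism and is    *)
(* given on letters by                                                       *)
(*    Delta(a) = a (x) 1 + 1 (x) a + sum_{b,c | contr a b c} b (x) c         *)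
(* Its value on a word w, as an element of Q<L> (x) Q<L>, is represented by  *)
(* its coefficient function (u,v) |-> (Delta(w) | u (x) v); the recursion is *)
(* Delta(a w) = Delta(a) Delta(w).                                           *)
Fixpoint deltaw (L : eqType) (contr : L -> L -> L -> bool) (w u v : seq L)
  : rat :=
  match w with
  | [::] => b2q ((u == [::]) && (v == [::]))
  | a :: w' =>
      (match u with b :: u' => b2q (b == a) * deltaw contr w' u' v
                  | [::] => 0 end)
    + (match v with c :: v' => b2q (c == a) * deltaw contr w' u v'
                  | [::] => 0 end)
    + (match u, v with
       | b :: u', c :: v' => b2q (contr a b c) * deltaw contr w' u' v'
       | _, _ => 0 end)
  end.

Fixpoint words_over (L : Type) (s : seq L) (n : nat) : seq (seq L) :=
  match n with
  | 0 => [:: [::]]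
  | n'.+1 => [seq a :: w | a <- s, w <- words_over s n']
  end.

Definition words_upto (L : Type) (s : seq L) (m : nat) : seq (seq L) :=
  flatten [seq words_over s n | n <- iota 0 m.+1].

(* (Delta psi | u (x) v) = sum_w (psi | w) (Delta w | u (x) v).  The sum is  *)
(* taken over a finite list of words which contains every w with            *)
(* (Delta w | u (x) v) <> 0: such w have length <= |u|+|v| and letters in    *)
(* [letters u v] (supplied per alphabet below).                              *)
Definition coprod (L : eqType) (letters : seq L -> seq L -> seq L)
  (contr : L -> L -> L -> bool) (psi : series L) (u v : seq L) : rat :=
  \sum_(w <- words_upto (letters u v) (size u + size v))
     psi w * deltaw contr w u v.

Definition primitive (L : eqType) (letters : seq L -> seq L -> seq L)
  (contr : L -> L -> L -> bool) (psi : series L) : Prop :=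
  forall u v : seq L,
    coprod letters contr psi u v = psi u * b2q (v == [::]) + b2q (u == [::]) * psi v.

(*  X-letters : option 'Z_N.  None = x_0,  Some k = x_zeta with              *)
(*     zeta = exp(2 pi i k / N)  (mu_N is encoded by exponents in Z/NZ, so   *)
(*     zeta1 zeta2 <-> k1 + k2, zeta^-1 <-> -k, 1 <-> 0, zeta^m <-> k *+ m). *)
(*  X~-letters : also option 'Z_N.  None = x~, Some a = x~_a.                *)
(*  Y-letters (and Y~-letters) : nat * 'Z_N ;  (k', z) = y_{k'+1, z}.        *)
Definition XL (N : nat) := option 'Z_N.
Definition YL (N : nat) := (nat * 'Z_N)%type.

Definition Xletters (N : nat) : seq (XL N) := enum {: option 'Z_N}.

(* shuffle coproduct: all letters primitive *)
Definition contr_sh (L : Type) (a b c : L) : bool := false.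
Definition Xcand (N : nat) (u v : seq (XL N)) : seq (XL N) := Xletters N.

Definition Ycand (N : nat) (u v : seq (YL N)) : seq (YL N) :=
  [seq (k, z) | k <- iota 0 (sumn [seq l.1.+1 | l <- u ++ v]), z <- enum 'Z_N].

(* Delta_* : y_{k,zeta} -> ... + sum_{k1+k2=k, zeta1 zeta2 = zeta} y_{k1,zeta1} (x) y_{k2,zeta2} *)
Definition contr_star (N : nat) (a b c : YL N) : bool :=
  (a.1 == b.1 + c.1 + 1)%N && (a.2 == b.2 + c.2).
(* Delta_*~ : y~_{k,a} -> ... + sum_{k1+k2=k} y~_{k1,a} (x) y~_{k2,a} *)
Definition contr_tstar (N : nat) (a b c : YL N) : bool :=
  [&& (a.1 == b.1 + c.1 + 1)%N, b.2 == a.2 & c.2 == a.2].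

(* y_{k,z} == x_0^{k-1} x_z : embedding of Y-words into X-words *)
Definition toX (N : nat) (w : seq (YL N)) : seq (XL N) :=
  flatten [seq rcons (nseq l.1 None) (Some l.2) | l <- w].

Fixpoint pword_acc (N : nat) (acc : 'Z_N) (w : seq (XL N)) : seq (XL N) :=
  match w with
  | [::] => [::]
  | None :: w' => None :: pword_acc acc w'
  | Some z :: w' => Some (acc + z) :: pword_acc (acc + z) w'
  end.
Definition pword (N : nat) (w : seq (XL N)) : seq (XL N) := pword_acc 0 w.

Fixpoint nextS (N : nat) (w : seq (XL N)) : 'Z_N :=
  match w with
  | [::] => 0
  | None :: w' => nextS w'
  | Some a :: _ => a
  end.
Fixpoint qword (N : nat) (w : seq (XL N)) : seq (XL N) :=
  match w with
  | [::] => [::]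
  | None :: w' => None :: qword w'
  | Some a :: w' => Some (a - nextS w') :: qword w'
  end.

Definition iotaN (N : nat) (a : nat) : 'Z_N := a%:R.
Definition iotaN_inv (N : nat) (g : 'Z_N) : nat :=
  if (val g == 0)%N then N else val g.

(* psi_* = pi_Y p^{-1}(psi) + sum_{n>=2} (-1)^{n-1}/n (psi|x_0^{n-1}x_1) y_{1,1}^n.
   Since p is a bijection on words, (p^{-1} psi | w) = (psi | p w). *)
Definition psi_star (N : nat) (psi : series (XL N)) : series (YL N) :=
  fun w =>
    psi (pword (toX w))
    + (if (2 <= size w)%N && all (fun l => l == ((0%N, 0) : YL N)) w
       then (-1) ^+ (size w).-1 / (size w)%:R
            * psi (rcons (nseq (size w).-1 None) (Some 0))
       else 0).

(* psi~_{*~} = pi_Y~ q~^{-1}(psi) + sum_{n>=2} sum_{a,b_1..b_n}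
     (-1)^{n-1}/(n N^{n+1}) (psi | x~^{n-1} x~_{iota a}) y~_{1,iota b1}..y~_{1,iota bn} *)
Definition psi_tstar (N : nat) (psi : series (XL N)) : series (YL N) :=
  fun w =>
    psi (qword (toX w))
    + (if (2 <= size w)%N && all (fun l => l.1 == 0%N) w
       then (-1) ^+ (size w).-1 / ((size w)%:R * (N%:R) ^+ (size w).+1)
            * \sum_(a < N) psi (rcons (nseq (size w).-1 None) (Some (iotaN N a.+1)))
       else 0).

Definition dmr_mu (N : nat) (psi : series (XL N)) : Prop :=
  [/\ psi [:: None] = 0 /\ psi [:: Some 0] = 0,
      primitive (@Xcand N) (@contr_sh (XL N)) psi,
      (forall z : 'Z_N, psi [:: Some z] = psi [:: Some (- z)])
    & primitive (@Ycand N) (@contr_star N) (psi_star psi)].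

Definition dmr_tilde (N : nat) (psi : series (XL N)) : Prop :=
  [/\ psi [:: None] = 0 /\ \sum_(a : 'Z_N) psi [:: Some a] = 0,
      primitive (@Xcand N) (@contr_sh (XL N)) psi,
      (forall a : 'Z_N, psi [:: Some a] = psi [:: Some (- a)])
    & primitive (@Ycand N) (@contr_tstar N) (psi_tstar psi)].

(* algebra morphism induced by a letter substitution sigma (continuous):
   (delta psi | w) = sum_{w' | sigma(w') = w} (psi | w') *)
Definition subst_series (N : nat) (sigma : XL N -> XL N) (psi : series (XL N))
  : series (XL N) :=
  fun w => \sum_(w' <- words_over (Xletters N) (size w) | map sigma w' == w) psi w'.

(* delta_gamma : x_0 -> x_0, x_zeta -> x_{zeta^{iota^{-1} gamma}} *)
Definition delta_mu (N : nat) (g : 'Z_N) : series (XL N) -> series (XL N) :=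
  subst_series (fun l => match l with
                         | None => None
                         | Some z => Some (z *+ iotaN_inv g) end).

Definition delta_tilde (N : nat) (g : 'Z_N) : series (XL N) -> series (XL N) :=
  subst_series (fun l => match l with
                         | None => None
                         | Some a => Some (g * a) end).

From HB Require Import structures.
From mathcomp Require Import all_boot all_order all_algebra.
From Stdlib Require Import FunctionalExtensionality.
Import GRing.Theory.
Local Open Scope ring_scope.

(* Both delta_gamma and delta~_gamma are induced by a permutation of the
   letters which acts on the indices in Z/NZ (exponents of the roots of unity
   for mu_N) by an additive automorphism h: multiplication by gamma.
   Relabelling a series along such an h preserves each defining condition of
   dmr_0: the coproducts are equivariant because their contraction rules only
   involve the group law of Z/NZ, the maps p and q~ commute with h because
   they are built from partial sums and differences of indices, and the
   correction terms of psi_* and psi~_*~ involve either the letter x_1, fixed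
   since h 0 = 0, or a full sum over Z/NZ, which is invariant under
   reindexing by h. *)

Set Implicit Arguments.
Unset Strict Implicit.
Unset Printing Implicit Defensive.

Section SeriesComap.
Variable L : eqType.

Definition series_comap (t : L -> L) (psi : series L) : series L :=
  fun w => psi (map t w).

Lemma words_over_map (t : L -> L) s n :
  words_over (map t s) n = map (map t) (words_over s n).
Proof.
by elim: n => //= n IH; rewrite IH map_allpairs allpairs_mapl allpairs_mapr.
Qed.

Lemma words_upto_map (t : L -> L) s n :
  words_upto (map t s) n = map (map t) (words_upto s n).
Proof.
rewrite /words_upto map_flatten -map_comp.
by congr flatten; apply: eq_map => k; apply: words_over_map.
Qed.

Lemma perm_words_upto (s1 s2 : seq L) n : perm_eq s1 s2 ->
  perm_eq (words_upto s1 n) (words_upto s2 n).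
Proof.
move=> s12; rewrite /words_upto; elim: (iota 0 n.+1) => //= k r IH.
by apply: perm_cat IH; elim: k => //= k IHk; apply: perm_allpairs.
Qed.

Lemma words_over_uniq (s : seq L) n : uniq s -> uniq (words_over s n).
Proof.
move=> s_uniq; elim: n => //= n IH; apply: allpairs_uniq => //.
by move=> [a u] [b v] _ _ /= [-> ->].
Qed.

Lemma mem_words_over (s : seq L) w :
  {subset w <= s} -> w \in words_over s (size w).
Proof.
elim: w => //= a w IH w_s; apply: (allpairs_f (fun a w => a :: w)).
  by apply: w_s; rewrite mem_head.
by apply: IH => b b_w; apply: w_s; rewrite in_cons b_w orbT.
Qed.

Section InjectiveRelabelling.
Variables (t : L -> L) (contr : L -> L -> L -> bool).
Hypothesis t_inj : injective t.
Hypothesis contr_t : forall a b c, contr (t a) (t b) (t c) = contr a b c.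

Lemma deltaw_map w u v :
  deltaw contr (map t w) (map t u) (map t v) = deltaw contr w u v.
Proof.
elim: w u v => [|a w IH] [|b u] [|c v] /=;
  rewrite ?IH ?(inj_eq t_inj) ?contr_t //.
- by rewrite -(IH [::] v).
- by rewrite -(IH u [::]).
- by rewrite -(IH u (c :: v)) -(IH (b :: u) v).
Qed.

Variable letters : seq L -> seq L -> seq L.
Hypothesis letters_t :
  forall u v, perm_eq (letters (map t u) (map t v)) (map t (letters u v)).

Lemma coprod_comap psi u v :
  coprod letters contr (series_comap t psi) u v
  = coprod letters contr psi (map t u) (map t v).
Proof.
rewrite /coprod !size_map (perm_big _ (perm_words_upto _ (letters_t u v))).
by rewrite words_upto_map big_map; apply: eq_bigr => w _; rewrite deltaw_map.
Qed.

Lemma primitive_comap psi :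
  primitive letters contr psi -> primitive letters contr (series_comap t psi).
Proof.
by move=> psi_prim u v; rewrite coprod_comap psi_prim; case: u; case: v.
Qed.

End InjectiveRelabelling.

End SeriesComap.

Lemma perm_enum_inj (T : finType) (f : T -> T) : injective f ->
  perm_eq (enum T) (map f (enum T)).
Proof.
move=> f_inj; have [f' _ f'K] := injF_bij f_inj.
apply: uniq_perm; first exact: enum_uniq.
  by rewrite map_inj_uniq ?enum_uniq.
by move=> x; rewrite -[x]f'K (mem_map f_inj) !mem_enum.
Qed.

Lemma subst_series_can N (sigma tau : XL N -> XL N) psi :
  cancel sigma tau -> cancel tau sigma ->
  subst_series sigma psi = series_comap tau psi.
Proof.
move=> sigmaK tauK; apply: functional_extensionality => w.
rewrite /subst_series.
have pre_w w' : (map sigma w' == w) = (w' == map tau w).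
  by rewrite -{1}(mapK tauK w) (inj_eq (inj_map (can_inj sigmaK))).
under eq_bigl do rewrite pre_w.
rewrite -big_filter filter_pred1_uniq ?big_seq1 //.
  by apply: words_over_uniq; rewrite enum_uniq.
by rewrite -(size_map tau); apply: mem_words_over => l _; rewrite mem_enum.
Qed.

Lemma sum_iotaN N (F : 'Z_N -> rat) : (1 < N)%N ->
  \sum_(a < N) F (iotaN N a.+1) = \sum_(z : 'Z_N) F z.
Proof.
case: N F => [|[|n]] // F _.
rewrite [RHS](reindex_inj (addIr 1)).
by apply: eq_bigr => a _; rewrite /iotaN -natr1 natr_Zp.
Qed.

Section AdditiveRelabelling.
Variables (N : nat) (h : {additive 'Z_N -> 'Z_N}).
Hypothesis h_inj : injective h.

Definition relabelX (l : XL N) : XL N := omap h l.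
Definition relabelY (l : YL N) : YL N := (l.1, h l.2).

Lemma relabelX_inj : injective relabelX.
Proof. exact: inj_omap. Qed.

Lemma relabelY_inj : injective relabelY.
Proof. by case=> [k a] [l b] [-> /h_inj ->]. Qed.

Lemma Xcand_relabel u v :
  perm_eq (Xcand (map relabelX u) (map relabelX v)) (map relabelX (Xcand u v)).
Proof. exact/perm_enum_inj/relabelX_inj. Qed.

Lemma Ycand_relabel u v :
  perm_eq (Ycand (map relabelY u) (map relabelY v)) (map relabelY (Ycand u v)).
Proof.
have -> : Ycand (map relabelY u) (map relabelY v) = Ycand u v.
  by rewrite /Ycand -map_cat -map_comp.
rewrite /Ycand map_allpairs.
have -> s : [seq relabelY (k, z) | k <- s, z <- enum 'Z_N]
            = [seq (k, z) | k <- s, z <- map h (enum 'Z_N)].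
  by rewrite allpairs_mapr.
by apply: perm_allpairs => //; apply: perm_enum_inj.
Qed.

Lemma contr_star_relabel a b c :
  contr_star (relabelY a) (relabelY b) (relabelY c) = contr_star a b c.
Proof. by rewrite /contr_star /= -[h _ + h _](raddfD h) (inj_eq h_inj). Qed.

Lemma contr_tstar_relabel a b c :
  contr_tstar (relabelY a) (relabelY b) (relabelY c) = contr_tstar a b c.
Proof. by rewrite /contr_tstar /= !(inj_eq h_inj). Qed.

Lemma toX_relabel w : toX (map relabelY w) = map relabelX (toX w).
Proof.
elim: w => //= -[k a] w IH.
by rewrite /toX /= -/(toX _) -/(toX _) IH map_cat map_rcons map_nseq.
Qed.

Lemma nextS_relabel w : nextS (map relabelX w) = h (nextS w).
Proof. by elim: w => [|[a|] w IH] //=; rewrite raddf0. Qed.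

Lemma qword_relabel w : qword (map relabelX w) = map relabelX (qword w).
Proof. by elim: w => [|[a|] w IH] //=; rewrite IH // nextS_relabel raddfB. Qed.

Lemma pword_acc_relabel acc w :
  pword_acc (h acc) (map relabelX w) = map relabelX (pword_acc acc w).
Proof. by elim: w acc => [|[a|] w IH] acc //=; rewrite -?(raddfD h) IH. Qed.

Lemma pword_relabel w : pword (map relabelX w) = map relabelX (pword w).
Proof. by rewrite /pword -pword_acc_relabel raddf0. Qed.

Lemma psi_star_relabel psi :
  psi_star (series_comap relabelX psi) = series_comap relabelY (psi_star psi).
Proof.
apply: functional_extensionality => w.
rewrite /psi_star /series_comap toX_relabel pword_relabel size_map.
rewrite map_rcons map_nseq /= raddf0 all_map.
have zero_fixed : relabelY (0%N, 0) = (0%N, 0) by rewrite /relabelY /= raddf0.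
suff -> : all (preim relabelY (eq_op^~ ((0%N, 0) : YL N))) w
          = all (eq_op^~ ((0%N, 0) : YL N)) w by [].
by apply: eq_all => l; rewrite /= -{1}zero_fixed (inj_eq relabelY_inj).
Qed.

Hypothesis N_gt1 : (1 < N)%N.

Lemma psi_tstar_relabel psi :
  psi_tstar (series_comap relabelX psi) = series_comap relabelY (psi_tstar psi).
Proof.
apply: functional_extensionality => w.
rewrite /psi_tstar /series_comap toX_relabel qword_relabel size_map all_map.
have sum_relabel n :
    \sum_(a < N) psi (map relabelX (rcons (nseq n None) (Some (iotaN N a.+1))))
    = \sum_(a < N) psi (rcons (nseq n None) (Some (iotaN N a.+1))).
  pose F z := psi (rcons (nseq n None) (Some z)).
  transitivity (\sum_(a < N) F (h (iotaN N a.+1))).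
    by apply: eq_bigr => a _; rewrite map_rcons map_nseq.
  by rewrite (sum_iotaN (F \o h)) // (sum_iotaN F) // [RHS](reindex_inj h_inj).
by rewrite sum_relabel.
Qed.

Lemma primitive_sh_relabel psi :
  primitive (@Xcand N) (@contr_sh _) psi ->
  primitive (@Xcand N) (@contr_sh _) (series_comap relabelX psi).
Proof.
exact: (primitive_comap (contr := @contr_sh _) relabelX_inj (fun _ _ _ => erefl)
  Xcand_relabel).
Qed.

Lemma dmr_mu_relabel psi : dmr_mu psi -> dmr_mu (series_comap relabelX psi).
Proof.
case=> [[psi_x0 psi_x1] psi_sh psi_sym psi_st]; split.
- by rewrite /series_comap /= raddf0.
- exact: primitive_sh_relabel.
- by move=> a; rewrite /series_comap /= raddfN; apply: psi_sym.
- rewrite psi_star_relabel.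
  exact (primitive_comap relabelY_inj contr_star_relabel Ycand_relabel psi_st).
Qed.

Lemma dmr_tilde_relabel psi :
  dmr_tilde psi -> dmr_tilde (series_comap relabelX psi).
Proof.
case=> [[psi_x psi_sum] psi_sh psi_sym psi_st]; split.
- by split=> //; rewrite (reindex_inj h_inj) in psi_sum.
- exact: primitive_sh_relabel.
- by move=> a; rewrite /series_comap /= raddfN; apply: psi_sym.
- rewrite psi_tstar_relabel.
  exact (primitive_comap relabelY_inj contr_tstar_relabel Ycand_relabel psi_st).
Qed.

End AdditiveRelabelling.

Lemma mulrn_iotaN_inv N (g z : 'Z_N) : (1 < N)%N -> z *+ iotaN_inv g = z * g.
Proof.
move=> N_gt1; rewrite -mulr_natr /iotaN_inv; congr (_ * _).
case: eqP => [g0 | _]; last exact: natr_Zp.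
by rewrite pchar_Zp //; apply: val_inj.
Qed.

Theorem proposition3p14 (N : nat) (hN : (3 <= N)%N) (g : 'Z_N)
    (hg : g \is a GRing.unit) :
  (forall psi : series (XL N), dmr_tilde psi -> dmr_tilde (delta_tilde g psi))
  /\ (forall psi : series (XL N), dmr_mu psi -> dmr_mu (delta_mu g psi)).
Proof.
have N_gt1 : (1 < N)%N by apply: leq_trans hN.
have gV_unit : g^-1 \is a GRing.unit by rewrite unitrV.
split=> psi psi_dmr.
- rewrite /delta_tilde (@subst_series_can _ _ (relabelX (g^-1 \*o idfun))).
  + exact (dmr_tilde_relabel (h := g^-1 \*o idfun) (mulrI gV_unit) N_gt1
      psi_dmr).
  + by case=> //= a; rewrite mulKr.
  + by case=> //= a; rewrite mulVKr.
- rewrite /delta_mu (@subst_series_can _ _ (relabelX (g^-1 \o* idfun))).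
  + exact (dmr_mu_relabel (h := g^-1 \o* idfun) (mulIr gV_unit) psi_dmr).
  + by case=> //= a; rewrite mulrn_iotaN_inv ?mulrK.
  + by case=> //= a; rewrite mulrn_iotaN_inv ?mulrVK.
Qed.
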